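(* Let $(\mathfrak{X},\pi)$, $a$, $s$, $S$ be as in the context, let $\eta\in(0,\min\{1,\|a\|^{-1}\})$ and $\mathbb{H}_\eta:=\{z\in\mathbb{H}:\operatorname{Im}z\ge\eta,\ |z|\le\eta^{-1}\}$. Let $\mathfrak{B}_\eta$ be the set of functions $\mathfrak{u}:\mathbb{H}_\eta\to\mathcal{B}(\mathfrak{X},\mathbb{H})$ with $\inf_{z\in\mathbb{H}_\eta}\inf_x\operatorname{Im}\mathfrak{u}_x(z)\ge\eta^3/(2+\|S\|)^2$ and $\sup_{z\in\mathbb{H}_\eta}\|\mathfrak{u}(z)\|\le1/\eta$, and define $\Phi(\mathfrak{u})(z):=-1/(z+a+S\mathfrak{u}(z))$. Then $\Phi$ maps $\mathfrak{B}_\eta$ to itself and for all $\mathfrak{u},\mathfrak{w}\in\mathfrak{B}_\eta$ \[ \sup_{z\in\mathbb{H}_\eta}\sup_{x\in\mathfrak{X}}D\big(\Phi(\mathfrak{u})_x(z),\Phi(\mathfrak{w})_x(z)\big)\le\Big(1+\frac{\eta^2}{\|S\|}\Big)^{-2}\sup_{z\in\mathbb{H}_\eta}\sup_{x\in\mathfrak{X}}D\big(\mathfrak{u}_x(z),\mathfrak{w}_x(z)\big), \] where $D(\zeta,\omega):=\frac{|\zeta-\omega|^2}{(\operatorname{Im}\zeta)(\operatorname{Im}\omega)}$ for $\zeta,\omega\in\mathbb{H}$. In particular, the fixed point equation $\mathfrak{u}=\Phi(\mathfrak{u})$ has a unique solution $\mathfrak{u}\in\mathfrak{B}_\eta$.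
   Context: Let $(\mathfrak{X},\pi)$ be a measure space where $\pi$ is a probability measure; $\mathcal{B}(\mathfrak{X},\mathbb{D})$ denotes bounded measurable $\mathbb{D}$-valued functions with sup norm $\|w\|=\sup_x|w_x|$, and $\|S\|$ the induced operator norm. Let $a\in\mathcal{B}(\mathfrak{X},\mathbb{R})$, $s\in\mathcal{B}(\mathfrak{X}^2,[0,\infty))$ symmetric, $(Sw)_x=\int s_{xy}w_y\,\pi(\mathrm{d}y)$. $\mathbb{H}$ is the open complex upper half-plane. Operations on functions ($1/\cdot$, addition of $z$) are pointwise in $x$. (If $\|S\|=0$ the factor $(1+\eta^2/\|S\|)^{-2}$ is read as $0$.) *)

From HB Require Import structures.
From mathcomp Require Import all_boot all_order all_algebra.
From mathcomp Require Import all_classical all_reals all_analysis.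
From mathcomp Require Import complex.

Set Implicit Arguments.
Unset Strict Implicit.
Unset Printing Implicit Defensive.

Import Order.TTheory GRing.Theory Num.Theory.
Local Open Scope classical_set_scope.
Local Open Scope ring_scope.

Section Defs.
Context {R : realType} {d : measure_display} {X : measurableType d}.

Definition cre (z : R[i]) : R := @complex.Re R z.
Definition cim (z : R[i]) : R := @complex.Im R z.

Definition cmod (z : R[i]) : R := Num.sqrt (cre z ^+ 2 + cim z ^+ 2).

Definition supnorm (w : X -> R[i]) : R := sup (range (fun x => cmod (w x))).
Definition supnormR (a : X -> R) : R := sup (range (fun x => `|a x|)).

Definition cmeasurable (w : X -> R[i]) : Prop :=
  measurable_fun setT (fun x => cre (w x)) /\ measurable_fun setT (fun x => cim (w x)).

Definition cbounded (w : X -> R[i]) : Prop :=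
  exists M : R, forall x, cmod (w x) <= M.

Definition BC (w : X -> R[i]) : Prop := cmeasurable w /\ cbounded w.

Definition BH (w : X -> R[i]) : Prop := BC w /\ (forall x, 0 < cim (w x)).

Definition Sop (P : probability X R) (s : X -> X -> R) (w : X -> R[i]) : X -> R[i] :=
  fun x => @complex.Complex R (Rintegral P setT (fun y => s x y * cre (w y)))
                   (Rintegral P setT (fun y => s x y * cim (w y))).

Definition opnorm (P : probability X R) (s : X -> X -> R) : R :=
  sup [set supnorm (Sop P s w) | w in [set w | BC w /\ supnorm w <= 1]].

Definition Heta (eta : R) : set R[i] :=
  [set z | 0 < cim z /\ eta <= cim z /\ cmod z <= eta^-1].

(* the set B_eta of functions H_eta -> B(X,H) (values off H_eta are irrelevant) *)
Definition Beta (P : probability X R) (s : X -> X -> R) (eta : R)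
  : set (R[i] -> X -> R[i]) :=
  [set u | forall z, Heta eta z ->
      BH (u z) /\
      (forall x, eta ^+ 3 / (2 + opnorm P s) ^+ 2 <= cim (u z x)) /\
      (forall x, cmod (u z x) <= eta^-1)].

Definition Phi (P : probability X R) (a : X -> R) (s : X -> X -> R)
  (u : R[i] -> X -> R[i]) : R[i] -> X -> R[i] :=
  fun z x => - (z + @complex.Complex R (a x) 0 + Sop P s (u z) x)^-1.

Definition Dh (zeta omega : R[i]) : R :=
  cmod (zeta - omega) ^+ 2 / (cim zeta * cim omega).

Definition supD (eta : R) (u w : R[i] -> X -> R[i]) : R :=
  sup [set r | exists z x, Heta eta z /\ r = Dh (u z x) (w z x)].

(* contraction factor (1 + eta^2/||S||)^(-2), read as 0 when ||S|| = 0 *)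
Definition kfactor (P : probability X R) (s : X -> X -> R) (eta : R) : R :=
  if opnorm P s == 0 then 0 else ((1 + eta ^+ 2 / opnorm P s) ^+ 2)^-1.

End Defs.

From HB Require Import structures.
From mathcomp Require Import all_boot all_order all_algebra.
From mathcomp Require Import all_classical all_reals all_analysis.
From mathcomp Require Import complex.
From mathcomp Require Import measurable_realfun ring lra.

(* Write [zeta = z + a + S u(z)], so that [Phi u = - zeta^-1].  Since
   [Im (S u) >= 0] and [|S u| <= ||S|| / eta], one has [Im zeta >= eta] and
   [|zeta| <= (2 + ||S||) / eta], which are exactly the bounds making [-1/zeta]
   belong to [B_eta].  The map [zeta |-> -1/zeta] preserves [D], and
   [zeta_u - zeta_w = S (u - w)]; a Cauchy-Schwarz inequality for the positive
   kernel [s] turns the pointwise bound [|u - w|^2 <= K Im u Im w], with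
   [K = sup D(u, w)], into [|S (u - w)|^2 <= K (S Im u) (S Im w)].  With
   [A = S Im u <= ||S|| / eta], [B = S Im w] and [Im z >= eta], this gives
   [D <= K A B / ((eta + A) (eta + B)) <= K (1 + eta^2 / ||S||)^-2].
   Existence and uniqueness then follow as in Banach's theorem, since [D]
   dominates [eta^2 |u - w|^2]: the iterates of [Phi] from the constant [i]
   converge geometrically. *)


Set Implicit Arguments.
Unset Strict Implicit.
Unset Printing Implicit Defensive.

Import Order.TTheory GRing.Theory Num.Theory.
Local Open Scope classical_set_scope.
Local Open Scope ring_scope.

Section RealInequalities.
Variable R : realType.
Implicit Types (x y t A B C K N q : R).

Lemma sqr_le_norm x y : 0 <= y -> x ^+ 2 <= y ^+ 2 -> `|x| <= y.
Proof. by move=> y0; rewrite -real_normK ?num_real // ler_pXn2r ?nnegrE. Qed.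

Lemma ler_pdivM x y b c : 0 <= x -> x <= y -> 0 < b -> b <= c -> x / c <= y / b.
Proof.
move=> x0 xy b0 bc; have c0 : 0 < c := lt_le_trans b0 bc.
apply: ler_pM => //; first by rewrite invr_ge0 ltW.
by rewrite lef_pV2 ?posrE.
Qed.

(* Cauchy-Schwarz, then AM-GM with a free weight [t]. *)
Lemma dot_le_amgm c1 c2 d1 d2 N k g h t :
  0 <= N -> N ^+ 2 = c1 ^+ 2 + c2 ^+ 2 -> 0 <= k -> 0 <= g -> 0 <= h -> 0 < t ->
  d1 ^+ 2 + d2 ^+ 2 <= k ^+ 2 * g * h ->
  2 * t * (c1 * d1 + c2 * d2) <= N * k * (t ^+ 2 * g + h).
Proof.
move=> N0 NE k0 g0 h0 t0 hd.
apply: le_trans (ler_norm _) (sqr_le_norm _ _); first by rewrite !mulr_ge0 //; nra.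
have cs : (c1 * d1 + c2 * d2) ^+ 2 <= N ^+ 2 * (d1 ^+ 2 + d2 ^+ 2).
  rewrite NE -subr_ge0.
  have -> : (c1 ^+ 2 + c2 ^+ 2) * (d1 ^+ 2 + d2 ^+ 2) - (c1 * d1 + c2 * d2) ^+ 2
    = (c1 * d2 - c2 * d1) ^+ 2 by ring.
  exact: sqr_ge0.
have amgm : 4 * t ^+ 2 * g * h <= (t ^+ 2 * g + h) ^+ 2.
  rewrite -subr_ge0.
  have -> : (t ^+ 2 * g + h) ^+ 2 - 4 * t ^+ 2 * g * h = (t ^+ 2 * g - h) ^+ 2 by ring.
  exact: sqr_ge0.
have h1 : (c1 * d1 + c2 * d2) ^+ 2 <= N ^+ 2 * (k ^+ 2 * g * h).
  by apply: le_trans cs _; apply: ler_wpM2l; rewrite ?sqr_ge0.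
rewrite !exprMn (_ : 2 ^+ 2 = 4); last by rewrite expr2 -natrM.
apply: (@le_trans _ _ (4 * t ^+ 2 * (N ^+ 2 * (k ^+ 2 * g * h)))).
  by apply: ler_wpM2l => //; nra.
have -> : 4 * t ^+ 2 * (N ^+ 2 * (k ^+ 2 * g * h)) = N ^+ 2 * k ^+ 2 * (4 * t ^+ 2 * g * h).
  by ring.
by apply: ler_wpM2l; rewrite ?mulr_ge0 ?sqr_ge0.
Qed.

(* Take [t = N / (k A)]; when [k A = 0], a large [t] is contradictory. *)
Lemma sqr_le_of_amgm N k A B : 0 <= N -> 0 <= k -> 0 <= A -> 0 <= B ->
  (forall t, 0 < t -> 2 * t * N ^+ 2 <= N * k * (t ^+ 2 * A + B)) ->
  N ^+ 2 <= k ^+ 2 * A * B.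
Proof.
move=> N0 k0 A0 B0 h.
have [->|Nn0] := eqVneq N 0; first by rewrite expr0n /= !mulr_ge0 ?sqr_ge0.
have Np : 0 < N by rewrite lt_def Nn0.
have h' t : 0 < t -> 2 * t * N <= k * (t ^+ 2 * A + B).
  move=> t0; have := h t t0.
  have -> : 2 * t * N ^+ 2 = N * (2 * t * N) by ring.
  by rewrite -[N * k * _]mulrA ler_pM2l.
have [kA0|kAn0] := eqVneq (k * A) 0.
  have t0 : 0 < (k * B + 1) / (2 * N) by rewrite divr_gt0 //; nra.
  have := h' _ t0.
  have -> : 2 * ((k * B + 1) / (2 * N)) * N = k * B + 1 by field; apply/lt0r_neq0.
  have -> : k * (((k * B + 1) / (2 * N)) ^+ 2 * A + B) =
     k * B + ((k * B + 1) / (2 * N)) ^+ 2 * (k * A) by ring.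
  by rewrite kA0 mulr0 addr0; lra.
have kAp : 0 < k * A by rewrite lt_def kAn0 mulr_ge0.
have An0 : A != 0 by apply: contraNneq kAn0 => ->; rewrite mulr0.
have kn0 : k != 0 by apply: contraNneq kAn0 => ->; rewrite mul0r.
have := h' (N / (k * A)) (divr_gt0 Np kAp).
have -> : k * ((N / (k * A)) ^+ 2 * A + B) = N ^+ 2 / (k * A) + k * B.
  by field; rewrite An0 kn0.
have -> : 2 * (N / (k * A)) * N = 2 * (N ^+ 2 / (k * A)) by field; rewrite An0 kn0.
move=> hle; have : N ^+ 2 / (k * A) <= k * B by lra.
rewrite ler_pdivrMr // => hN.
by rewrite (_ : k ^+ 2 * A * B = k * B * (k * A)) //; ring.
Qed.

(* [A / (c + A)] increases with [A] and decreases with [c], so [c >= e] and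
   [A <= o / e] bound it by [o / (o + e ^+ 2)]. *)
Lemma ratio_le_contraction e c o A B K Y : 0 < e -> e <= c -> 0 < o ->
  0 <= A -> 0 <= B -> e * A <= o -> e * B <= o -> 0 <= K -> Y <= K * A * B ->
  Y / ((c + A) * (c + B)) <= ((1 + e ^+ 2 / o) ^+ 2)^-1 * K.
Proof.
move=> e0 ec o0 A0 B0 eA eB K0 YK.
have den : 0 < (c + A) * (c + B) by apply: mulr_gt0; lra.
have oe : 0 < o + e ^+ 2 by nra.
rewrite ler_pdivrMr //; apply: le_trans YK _.
have -> : ((1 + e ^+ 2 / o) ^+ 2)^-1 = (o / (o + e ^+ 2)) ^+ 2.
  by field; rewrite !gt_eqF.
have fA : A <= o / (o + e ^+ 2) * (c + A) by rewrite mulrC mulrA ler_pdivlMr //; nra.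
have fB : B <= o / (o + e ^+ 2) * (c + B) by rewrite mulrC mulrA ler_pdivlMr //; nra.
have -> : (o / (o + e ^+ 2)) ^+ 2 * K * ((c + A) * (c + B)) =
  K * ((o / (o + e ^+ 2) * (c + A)) * (o / (o + e ^+ 2) * (c + B))) by ring.
by rewrite -mulrA; apply: ler_wpM2l => //; apply: ler_pM.
Qed.

(* The limit of a sequence whose steps are bounded by [C * q ^+ n]: the
   sequence [r n - C * q ^+ n / (1 - q)] is nondecreasing, and its supremum is
   this limit. *)
Definition geometric_lim (r : nat -> R) C q :=
  sup (range (fun n => r n - C * q ^+ n / (1 - q))).

Lemma geometric_lim_bound (r : nat -> R) C q : 0 <= C -> 0 <= q < 1 ->
  (forall n, `|r n.+1 - r n| <= C * q ^+ n) ->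
  forall n, `|r n - geometric_lim r C q| <= C * q ^+ n / (1 - q).
Proof.
move=> C0 /andP[q0 q1] hr.
pose E n := C * q ^+ n / (1 - q).
have E_step n : E n - E n.+1 = C * q ^+ n.
  by rewrite /E exprS; field; rewrite subr_eq0 gt_eqF.
have E0 n : 0 <= E n by rewrite /E !mulr_ge0 ?exprn_ge0 ?invr_ge0 //; lra.
pose lo n := r n - E n.
pose hi n := r n + E n.
have lo_incr : {homo lo : i j / (i <= j)%N >-> i <= j}.
  apply: homo_leq => [//|? ? ?|n]; first exact: le_trans.
  by have := hr n; rewrite ler_norml => /andP[? ?]; have := E_step n; rewrite /lo; lra.
have hi_decr : {homo hi : i j / (i <= j)%N >-> j <= i}.
  apply: homo_leq => [//|? ? ? h1 h2|n]; first exact: le_trans h2 h1.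
  by have := hr n; rewrite ler_norml => /andP[? ?]; have := E_step n; rewrite /hi; lra.
have lo_hi n m : lo n <= hi m.
  apply: le_trans (lo_incr _ _ (leq_maxl n m)) _.
  apply: le_trans (hi_decr _ _ (leq_maxr n m)).
  by rewrite /lo /hi; have := E0 (maxn n m); lra.
move=> n; rewrite ler_norml.
have l1 : lo n <= geometric_lim r C q.
  by apply: ub_le_sup; [exists (hi 0%N) => _ [k _ <-]; exact: lo_hi | exists n].
have l2 : geometric_lim r C q <= hi n.
  by apply: ge_sup; [exists (lo 0%N), 0%N | move=> _ [k _ <-]; exact: lo_hi].
by rewrite /lo /hi /E in l1 l2 *; apply/andP; split; lra.
Qed.

Lemma le0_of_geometric q E t : 0 <= q < 1 -> (forall n, t <= E * q ^+ n) -> t <= 0.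
Proof.
move=> /andP[q0 q1] h; rewrite leNgt; apply/negP => t0.
have q1' : `|q| < 1 by rewrite ger0_norm.
have /cvgrPdist_lt /(_ t t0) := @cvg_geometric R E q q1'.
case=> N _ /(_ N (leqnn N)); rewrite /= sub0r normrN => hN.
by have := h N; have := ler_norm (E * q ^+ N); rewrite /geometric /=; lra.
Qed.

Lemma cvg_of_geometric_bound (r : nat -> R) L E q : 0 <= q < 1 ->
  (forall n, `|r n - L| <= E * q ^+ n) -> r @ \oo --> L.
Proof.
move=> /andP[q0 q1] h; apply/cvgrPdist_lt => eps eps0.
have q1' : `|q| < 1 by rewrite ger0_norm.
have /cvgrPdist_lt /(_ eps eps0) := @cvg_geometric R E q q1'.
apply: filterS => n /=; rewrite sub0r normrN distrC /geometric /= => hn.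
exact: le_lt_trans (h n) (le_lt_trans (ler_norm _) hn).
Qed.

End RealInequalities.

Section ComplexParts.
Variable R : realType.
Implicit Types z w : R[i].

Lemma creD z w : cre (z + w) = cre z + cre w. Proof. by case: z; case: w. Qed.
Lemma cimD z w : cim (z + w) = cim z + cim w. Proof. by case: z; case: w. Qed.
Lemma creN z : cre (- z) = - cre z. Proof. by case: z. Qed.
Lemma cimN z : cim (- z) = - cim z. Proof. by case: z. Qed.
Lemma creB z w : cre (z - w) = cre z - cre w. Proof. by case: z; case: w. Qed.
Lemma cimB z w : cim (z - w) = cim z - cim w. Proof. by case: z; case: w. Qed.
Lemma creV z : cre z^-1 = cre z / (cre z ^+ 2 + cim z ^+ 2). Proof. by case: z. Qed.
Lemma cimV z : cim z^-1 = - (cim z / (cre z ^+ 2 + cim z ^+ 2)). Proof. by case: z. Qed.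

Lemma complex_ext z w : cre z = cre w -> cim z = cim w -> z = w.
Proof. by case: z; case: w => ? ? ? ? /= -> ->. Qed.

Lemma cmod_sqr z : cmod z ^+ 2 = cre z ^+ 2 + cim z ^+ 2.
Proof. by rewrite /cmod sqr_sqrtr // addr_ge0 // sqr_ge0. Qed.

Lemma cmod_ge0 z : 0 <= cmod z. Proof. exact: sqrtr_ge0. Qed.

Lemma cmod_le_sqr z r : 0 <= r -> (cmod z <= r) = (cre z ^+ 2 + cim z ^+ 2 <= r ^+ 2).
Proof. by move=> r0; rewrite -cmod_sqr ler_pXn2r // ?nnegrE ?cmod_ge0. Qed.

Lemma cmod0 : cmod (0 : R[i]) = 0.
Proof. by rewrite /cmod /cre /cim /= expr0n /= addr0 sqrtr0. Qed.

Lemma cmodN z : cmod (- z) = cmod z.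
Proof. by rewrite /cmod creN cimN !sqrrN. Qed.

Lemma cmod_real (r : R) : cmod (Complex r 0) = `|r|.
Proof. by rewrite /cmod /cre /cim /= expr0n /= addr0 sqrtr_sqr. Qed.

Lemma cmodZ (c : R) z : 0 <= c -> cmod (Complex (c * cre z) (c * cim z)) = c * cmod z.
Proof.
move=> c0; rewrite /cmod /cre /cim /= !exprMn -mulrDr sqrtrM ?sqr_ge0 //.
by rewrite sqrtr_sqr ger0_norm.
Qed.

Lemma cre_le_cmod z : `|cre z| <= cmod z.
Proof.
by apply: sqr_le_norm; rewrite ?cmod_ge0 // cmod_sqr lerDl sqr_ge0.
Qed.

Lemma cim_le_cmod z : `|cim z| <= cmod z.
Proof.
by apply: sqr_le_norm; rewrite ?cmod_ge0 // cmod_sqr lerDr sqr_ge0.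
Qed.

Lemma cmod_le_normD z : cmod z <= `|cre z| + `|cim z|.
Proof.
rewrite cmod_le_sqr ?addr_ge0 //.
rewrite -(real_normK (num_real (cre z))) -(real_normK (num_real (cim z))).
by have := normr_ge0 (cre z); have := normr_ge0 (cim z); nra.
Qed.

Lemma ler_cmodD z w : cmod (z + w) <= cmod z + cmod w.
Proof.
rewrite cmod_le_sqr ?addr_ge0 ?cmod_ge0 // creD cimD.
have cauchy_schwarz : cre z * cre w + cim z * cim w <= cmod z * cmod w.
  apply: le_trans (ler_norm _) (sqr_le_norm _ _); first by rewrite mulr_ge0 ?cmod_ge0.
  rewrite exprMn !cmod_sqr -subr_ge0.
  have -> : (cre z ^+ 2 + cim z ^+ 2) * (cre w ^+ 2 + cim w ^+ 2) -
    (cre z * cre w + cim z * cim w) ^+ 2 = (cre z * cim w - cim z * cre w) ^+ 2 by ring.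
  exact: sqr_ge0.
have := cmod_sqr z; have := cmod_sqr w; nra.
Qed.

Lemma Dh_ge0 z w : 0 < cim z -> 0 < cim w -> 0 <= Dh z w.
Proof. by move=> z0 w0; rewrite /Dh divr_ge0 ?sqr_ge0 // ltW ?mulr_gt0. Qed.

Lemma Dh_le_mul z w K : 0 < cim z -> 0 < cim w -> Dh z w <= K ->
  (cre z - cre w) ^+ 2 + (cim z - cim w) ^+ 2 <= K * cim z * cim w.
Proof.
by move=> z0 w0; rewrite /Dh cmod_sqr creB cimB ler_pdivrMr ?mulr_gt0 // mulrA.
Qed.

Lemma Dh_oppV z w : 0 < cim z -> 0 < cim w -> Dh (- z^-1) (- w^-1) = Dh z w.
Proof.
case: z => a b; case: w => c e /= b0 e0.
rewrite /Dh !cmod_sqr /cim /=.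
have p0 : a ^+ 2 + b ^+ 2 != 0 by apply/lt0r_neq0; nra.
have q0 : c ^+ 2 + e ^+ 2 != 0 by apply/lt0r_neq0; nra.
by field; rewrite (gt_eqF b0) (gt_eqF e0) p0 q0.
Qed.

Lemma cmod_le0 z : cmod z <= 0 -> z = 0.
Proof.
move=> z0; have : cmod z ^+ 2 <= 0 by rewrite expr2 mulr_ge0_le0 ?cmod_ge0.
rewrite cmod_sqr => h; apply: complex_ext; apply/eqP; rewrite -sqrf_eq0 eq_le sqr_ge0 andbT.
  by have := sqr_ge0 (cim z); rewrite /cre /=; lra.
by have := sqr_ge0 (cre z); rewrite /cim /=; lra.
Qed.

Lemma cmodB_le_Dh e z w K : 0 < e -> 0 < cim z -> 0 < cim w ->
  cmod z <= e^-1 -> cmod w <= e^-1 -> Dh z w <= K -> cmod (z - w) <= Num.sqrt K / e.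
Proof.
move=> e0 z0 w0 ze we zwK; have K0 : 0 <= K := le_trans (Dh_ge0 z0 w0) zwK.
rewrite cmod_le_sqr; last by rewrite divr_ge0 ?sqrtr_ge0 // ltW.
rewrite creB cimB.
apply: le_trans (Dh_le_mul z0 w0 zwK) _.
have cim_le c : cmod c <= e^-1 -> cim c <= e^-1.
  by move=> h; apply: le_trans (ler_norm _) (le_trans (cim_le_cmod c) h).
rewrite expr_div_n sqr_sqrtr // -mulrA ler_wpM2l // -exprVn expr2.
by apply: ler_pM; [exact: ltW | exact: ltW | exact: cim_le | exact: cim_le].
Qed.

Lemma Dh_le_cmodB e z w T : 0 < e -> e <= cim z -> e <= cim w ->
  cmod (z - w) <= T -> Dh z w <= T ^+ 2 / e ^+ 2.
Proof.
move=> e0 ez ew zwT; rewrite /Dh; apply: ler_pdivM; rewrite ?sqr_ge0 ?exprn_gt0 //.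
  by rewrite ler_pXn2r // nnegrE ?cmod_ge0 // (le_trans (cmod_ge0 _) zwT).
by rewrite expr2; apply: ler_pM => //; exact: ltW.
Qed.

Lemma cmod_oppV_le e z : 0 < e -> e <= cim z -> cmod (- z^-1) <= e^-1.
Proof.
move=> e0 ez; have z0 : 0 < cim z := lt_le_trans e0 ez.
have N0 : 0 < cre z ^+ 2 + cim z ^+ 2 by have := sqr_ge0 (cre z); nra.
rewrite cmod_le_sqr; last by rewrite invr_ge0 ltW.
rewrite creN cimN creV cimV opprK sqrrN.
rewrite (_ : _ + _ = (cre z ^+ 2 + cim z ^+ 2)^-1); last by field; rewrite gt_eqF.
rewrite exprVn lef_pV2 ?posrE ?exprn_gt0 //.
have : e ^+ 2 <= cim z ^+ 2 by rewrite ler_pXn2r // nnegrE ltW.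
by have := sqr_ge0 (cre z); lra.
Qed.

Lemma cim_oppV_ge e M z : 0 < e -> e <= cim z -> cmod z <= M ->
  e / M ^+ 2 <= cim (- z^-1).
Proof.
move=> e0 ez zM; have z0 : 0 < cim z := lt_le_trans e0 ez.
have N0 : 0 < cre z ^+ 2 + cim z ^+ 2 by have := sqr_ge0 (cre z); nra.
rewrite cimN cimV opprK; apply: ler_pdivM => //; first exact: ltW.
by rewrite -cmod_sqr ler_pXn2r // nnegrE ?cmod_ge0 // (le_trans (cmod_ge0 z)).
Qed.

End ComplexParts.

Section KernelIntegral.
Variables (R : realType) (d : measure_display) (X : measurableType d).
Variables (P : probability X R) (s : X -> X -> R) (Ms : R).
Hypothesis s_ge0 : forall x y, 0 <= s x y.
Hypothesis s_le : forall x y, s x y <= Ms.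
Hypothesis s_meas : measurable_fun setT (fun p : X * X => s p.1 p.2).

Definition bounded_measurable (g : X -> R) :=
  measurable_fun setT g /\ exists B, forall y, `|g y| <= B.

Local Notation bm := bounded_measurable.
Definition Sint x g := Rintegral P setT (fun y => s x y * g y).

Lemma bounded_measurableD g h : bm g -> bm h -> bm (fun y => g y + h y).
Proof.
move=> [mg [B gB]] [mh [C hC]]; split; first exact: measurable_funD.
by exists (B + C) => y; apply: le_trans (ler_normD _ _) (lerD (gB y) (hC y)).
Qed.

Lemma bounded_measurableN g : bm g -> bm (fun y => - g y).
Proof.
by move=> [mg [B gB]]; split; [exact: measurable_funN | exists B => y; rewrite normrN].
Qed.

Lemma bounded_measurableB g h : bm g -> bm h -> bm (fun y => g y - h y).
Proof. by move=> bg bh; apply: bounded_measurableD bg (bounded_measurableN bh). Qed.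

Lemma bounded_measurableZ c g : bm g -> bm (fun y => c * g y).
Proof.
move=> [mg [B gB]]; split; first exact: measurable_funM (measurable_cst _) mg.
by exists (`|c| * B) => y; rewrite normrM ler_wpM2l.
Qed.

Lemma bounded_measurable_cst c : bm (fun _ => c).
Proof. by split; [exact: measurable_cst | exists `|c|]. Qed.

Lemma bounded_measurable_norm g : bm g -> bm (fun y => `|g y|).
Proof.
move=> [mg [B gB]]; split; first exact: measurableT_comp.
by exists B => y; rewrite normr_id.
Qed.

Lemma bounded_measurable_cre w : BC w -> bm (fun y => cre (w y)).
Proof.
move=> [[mre _] [M wM]]; split => //.
by exists M => y; apply: le_trans (cre_le_cmod _) (wM y).
Qed.

Lemma bounded_measurable_cim w : BC w -> bm (fun y => cim (w y)).
Proof.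
move=> [[_ mim] [M wM]]; split => //.
by exists M => y; apply: le_trans (cim_le_cmod _) (wM y).
Qed.

Lemma bounded_measurable_kernel x g : bm g -> bm (fun y => s x y * g y).
Proof.
move=> [mg [B gB]]; split.
  exact: measurable_funM (measurable_fun_pair2 (f := fun p : X * X => s p.1 p.2) x s_meas) mg.
exists (Ms * B) => y; rewrite normrM ger0_norm //.
by apply: ler_pM => //; apply: le_trans (gB y).
Qed.

Lemma integrable_bounded_measurable g : bm g -> P.-integrable setT (EFin \o g).
Proof.
move=> [mg [B gB]]; apply: measurable_bounded_integrable => //.
  by rewrite [X in (X < _)%E]probability_setT ltry.
exists B; split; first exact: num_real.
by move=> M BM y _ /=; apply: le_trans (gB y) (ltW BM).
Qed.

Lemma integrable_kernel x g : bm g -> P.-integrable setT (EFin \o (fun y => s x y * g y)).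
Proof. by move=> bg; apply/integrable_bounded_measurable/bounded_measurable_kernel. Qed.

Lemma SintD x g h : bm g -> bm h -> Sint x (fun y => g y + h y) = Sint x g + Sint x h.
Proof.
move=> bg bh; rewrite /Sint -RintegralD ?integrable_kernel //.
by apply: eq_Rintegral => y _; rewrite mulrDr.
Qed.

Lemma SintB x g h : bm g -> bm h -> Sint x (fun y => g y - h y) = Sint x g - Sint x h.
Proof.
move=> bg bh; rewrite /Sint -RintegralB ?integrable_kernel //.
by apply: eq_Rintegral => y _; rewrite mulrBr.
Qed.

Lemma SintZ x c g : bm g -> Sint x (fun y => c * g y) = c * Sint x g.
Proof.
move=> bg; rewrite /Sint -RintegralZl ?integrable_kernel //.
by apply: eq_Rintegral => y _; rewrite mulrCA.
Qed.

Lemma ler_Sint x g h : bm g -> bm h -> (forall y, g y <= h y) -> Sint x g <= Sint x h.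
Proof.
move=> bg bh gh; rewrite /Sint; apply: le_Rintegral; rewrite ?integrable_kernel // => y _.
exact: ler_wpM2l.
Qed.

Lemma Sint_ge0 x g : (forall y, 0 <= g y) -> 0 <= Sint x g.
Proof. by move=> g0; apply: Rintegral_ge0 => y _; apply: mulr_ge0. Qed.

Lemma Sint_norm_le x g B : bm g -> (forall y, `|g y| <= B) -> `|Sint x g| <= Ms * B.
Proof.
move=> bg gB; rewrite /Sint.
apply: le_trans (le_normr_Rintegral measurableT (integrable_kernel x bg)) _.
have -> : Rintegral P setT (fun y => `|s x y * g y|) = Sint x (fun y => `|g y|).
  by apply: eq_Rintegral => y _; rewrite normrM ger0_norm.
apply: le_trans (_ : Rintegral P setT (fun _ => Ms * B) <= _).
  apply: le_Rintegral => //.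
  - exact/integrable_kernel/bounded_measurable_norm.
  - exact/integrable_bounded_measurable/bounded_measurable_cst.
  - by move=> y _; apply: ler_pM => //; exact: gB.
by rewrite Rintegral_cst //; move: (probability_setT P) => /= ->; rewrite mulr1.
Qed.

Lemma measurable_Rintegral_section (h : X * X -> R) B :
  measurable_fun setT h -> (forall p, 0 <= h p) -> (forall p, h p <= B) ->
  measurable_fun setT (fun x => Rintegral P setT (fun y => h (x, y))).
Proof.
move=> mh h0 hB; apply/measurable_EFinP.
apply: (eq_measurable_fun _ _
  (@measurable_fun_fubini_tonelli_F _ _ X X R P (EFin \o h) _ _)).
- move=> x _ /=; rewrite /Rintegral fineK //; apply: integrable_fin_num => //.
  apply: integrable_bounded_measurable.
  split; first exact: (measurable_fun_pair2 (f := h) x mh).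
  by exists B => y; rewrite ger0_norm.
- exact/measurable_EFinP.
- by move=> p /=; rewrite lee_fin.
Qed.

(* Shifting [g] by its bound [B] reduces to nonnegative integrands. *)
Lemma measurable_Sint g : bm g -> measurable_fun setT (fun x => Sint x g).
Proof.
move=> bg; have [mg [B gB]] := bg.
have gB_ge0 y : 0 <= g y + B by have := gB y; rewrite ler_norml; lra.
have B0 : 0 <= B := le_trans (normr_ge0 _) (gB point).
have shift x : Sint x g = Sint x (fun y => g y + B) - Sint x (fun _ => B).
  by rewrite SintD //; [lra | exact: bounded_measurable_cst].
rewrite (_ : (fun x => _) = fun x => Sint x (fun y => g y + B) - Sint x (fun _ => B));
  last by apply/funext => x; rewrite shift.
apply: measurable_funB.
  apply: (@measurable_Rintegral_section (fun p => s p.1 p.2 * (g p.2 + B)) (Ms * (B + B))).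
  - apply: measurable_funM s_meas (measurable_funD _ (measurable_cst _)).
    exact: measurableT_comp mg measurable_snd.
  - by move=> p; apply: mulr_ge0.
  - by move=> p; apply: ler_pM => //; have := gB p.2; rewrite ler_norml; lra.
apply: (@measurable_Rintegral_section (fun p => s p.1 p.2 * B) (Ms * B)).
- exact: measurable_funM s_meas (measurable_cst _).
- by move=> p; apply: mulr_ge0.
- by move=> p; apply: ler_wpM2r.
Qed.

(* Integrate [dot_le_amgm] against the kernel, with [(c1, c2)] the integral of
   [(f1, f2)] itself. *)
Lemma Sint_cauchy_schwarz x (f1 f2 g h : X -> R) K :
  bm f1 -> bm f2 -> bm g -> bm h -> 0 <= K ->
  (forall y, 0 <= g y) -> (forall y, 0 <= h y) ->
  (forall y, f1 y ^+ 2 + f2 y ^+ 2 <= K * g y * h y) ->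
  Sint x f1 ^+ 2 + Sint x f2 ^+ 2 <= K * Sint x g * Sint x h.
Proof.
move=> b1 b2 bg bh K0 g0 h0 fgh.
set c1 := Sint x f1; set c2 := Sint x f2.
pose N := Num.sqrt (c1 ^+ 2 + c2 ^+ 2); pose k := Num.sqrt K.
have NE : N ^+ 2 = c1 ^+ 2 + c2 ^+ 2 by rewrite sqr_sqrtr // addr_ge0 ?sqr_ge0.
have kE : k ^+ 2 = K by rewrite sqr_sqrtr.
rewrite -NE -kE; apply: sqr_le_of_amgm; rewrite ?sqrtr_ge0 ?Sint_ge0 // => t t0.
have bdot : bm (fun y => c1 * f1 y + c2 * f2 y).
  by apply: bounded_measurableD; apply: bounded_measurableZ.
have bsum : bm (fun y => t ^+ 2 * g y + h y).
  by apply: bounded_measurableD => //; apply: bounded_measurableZ.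
have lhs : Sint x (fun y => 2 * t * (c1 * f1 y + c2 * f2 y)) = 2 * t * N ^+ 2.
  rewrite (SintZ x (2 * t) bdot) SintD; try exact: bounded_measurableZ.
  by rewrite (SintZ x c1) // (SintZ x c2) // NE !expr2.
have rhs : Sint x (fun y => N * k * (t ^+ 2 * g y + h y)) =
    N * k * (t ^+ 2 * Sint x g + Sint x h).
  rewrite (SintZ x (N * k) bsum) SintD //; last exact: bounded_measurableZ.
  by rewrite (SintZ x (t ^+ 2)).
rewrite -lhs -rhs; apply: ler_Sint; [exact: bounded_measurableZ.. | move=> y].
by apply: dot_le_amgm; rewrite ?sqrtr_ge0 ?kE.
Qed.

Lemma cre_Sop w x : cre (Sop P s w x) = Sint x (fun y => cre (w y)). Proof. by []. Qed.
Lemma cim_Sop w x : cim (Sop P s w x) = Sint x (fun y => cim (w y)). Proof. by []. Qed.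

Lemma supnorm_le (w : X -> R[i]) M : (forall x, cmod (w x) <= M) -> supnorm w <= M.
Proof.
move=> wM; apply: ge_sup; first by exists (cmod (w point)), point.
by move=> _ [x _ <-].
Qed.

Lemma le_supnorm (w : X -> R[i]) x : cbounded w -> cmod (w x) <= supnorm w.
Proof.
by case=> M wM; apply: ub_le_sup; [exists M => _ [y _ <-] | exists x].
Qed.

Lemma cmod_Sop_le_kernel_bound w x : BC w -> (forall y, cmod (w y) <= 1) ->
  cmod (Sop P s w x) <= Ms + Ms.
Proof.
move=> bw w1; apply: le_trans (cmod_le_normD _) _; rewrite cre_Sop cim_Sop.
apply: lerD; rewrite -[Ms]mulr1; apply: Sint_norm_le.
- exact: bounded_measurable_cre.
- by move=> y; apply: le_trans (cre_le_cmod _) (w1 y).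
- exact: bounded_measurable_cim.
- by move=> y; apply: le_trans (cim_le_cmod _) (w1 y).
Qed.

Lemma cmod_Sop_le_opnorm w x : BC w -> (forall y, cmod (w y) <= 1) ->
  cmod (Sop P s w x) <= opnorm P s.
Proof.
move=> bw w1; apply: le_trans (le_supnorm x _) _.
  by exists (Ms + Ms) => y; exact: cmod_Sop_le_kernel_bound.
apply: ub_le_sup; last by exists w => //; split => //; exact: supnorm_le.
exists (Ms + Ms) => _ [v [bv v1] <-]; apply: supnorm_le => y.
by apply: cmod_Sop_le_kernel_bound => // z; apply: le_trans (le_supnorm z bv.2) v1.
Qed.

Lemma opnorm_ge0 : 0 <= opnorm P s.
Proof.
have BC0 : BC (fun _ : X => 0 : R[i]).
  by split; [split; exact: measurable_cst | exists 0 => _; rewrite cmod0].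
apply: le_trans (cmod_ge0 _) (cmod_Sop_le_opnorm point BC0 _).
by move=> _; rewrite cmod0.
Qed.

(* Rescale [w] by [c^-1] to the unit ball and use linearity of [S]. *)
Lemma cmod_Sop_le w x c : 0 < c -> BC w -> (forall y, cmod (w y) <= c) ->
  cmod (Sop P s w x) <= opnorm P s * c.
Proof.
move=> c0 bw wc.
have ci0 : 0 <= c^-1 by rewrite invr_ge0 ltW.
pose v y : R[i] := Complex (c^-1 * cre (w y)) (c^-1 * cim (w y)).
have v1 y : cmod (v y) <= 1.
  by rewrite /v cmodZ // -(mulVf (lt0r_neq0 c0)) ler_wpM2l.
have bv : BC v.
  split; last by exists 1.
  by split; apply: measurable_funM (measurable_cst _) _; case: bw => -[].
have Sv : Sop P s v x = Complex (c^-1 * cre (Sop P s w x)) (c^-1 * cim (Sop P s w x)).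
  congr Complex; rewrite ?cre_Sop ?cim_Sop -SintZ //.
  - exact: bounded_measurable_cre.
  - exact: bounded_measurable_cim.
move: (cmod_Sop_le_opnorm x bv v1); rewrite Sv cmodZ // => h.
rewrite -[cmod (Sop P s w x)](mulVKf (lt0r_neq0 c0)) [c * _]mulrC.
by apply: ler_wpM2r => //; exact: ltW.
Qed.

End KernelIntegral.

Lemma measurable_funV_gt0 (R : realType) (d : measure_display) (T : measurableType d)
    (f : T -> R) :
  measurable_fun setT f -> (forall x, 0 < f x) -> measurable_fun setT (fun x => (f x)^-1).
Proof.
move=> mf f0.
have mV : measurable_fun (`]0, +oo[%classic : set R) (@GRing.inv R).
  apply: open_continuous_measurable_fun; first exact: interval_open.
  move=> y; rewrite inE /= in_itv /= andbT => y0.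
  by apply: inv_continuous; exact: lt0r_neq0.
apply: (@measurable_comp _ _ _ _ _ _ (`]0, +oo[%classic : set R)) mV mf => //.
by move=> _ [x _ <-]; rewrite /= in_itv /= andbT.
Qed.

Section FixedPointMap.
Variables (R : realType) (d : measure_display) (X : measurableType d).
Variables (P : probability X R) (a : X -> R) (s : X -> X -> R) (eta Ma Ms : R).
Hypothesis a_meas : measurable_fun setT a.
Hypothesis a_le : forall x, `|a x| <= Ma.
Hypothesis s_ge0 : forall x y, 0 <= s x y.
Hypothesis s_le : forall x y, s x y <= Ms.
Hypothesis s_meas : measurable_fun setT (fun p : X * X => s p.1 p.2).
Hypothesis eta_gt0 : 0 < eta.
Hypothesis eta_lt1 : eta < 1.
Hypothesis eta_a : eta * supnormR a < 1.

Local Notation Sint := (Sint P s).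
Local Notation Phi := (Phi P a s).
Local Notation Beta := (Beta P s eta).
Local Notation opn := (opnorm P s).
Local Notation im_lb := (eta ^+ 3 / (2 + opn) ^+ 2).
Local Notation Sint_ge0 := (Sint_ge0 P s_ge0).
Local Notation SintB := (SintB P s_ge0 s_le s_meas).
Local Notation measurable_Sint := (measurable_Sint P s_ge0 s_le s_meas).
Local Notation Sint_cauchy_schwarz := (Sint_cauchy_schwarz P s_ge0 s_le s_meas).
Local Notation cmod_Sop_le := (cmod_Sop_le P s_ge0 s_le s_meas).

Definition Phi_denom (u : R[i] -> X -> R[i]) z x := z + Complex (a x) 0 + Sop P s (u z) x.

Lemma cre_Phi_denom u z x :
  cre (Phi_denom u z x) = cre z + a x + Sint x (fun y => cre (u z y)).
Proof. by rewrite /Phi_denom !creD. Qed.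

Lemma cim_Phi_denom u z x : cim (Phi_denom u z x) = cim z + Sint x (fun y => cim (u z y)).
Proof. by rewrite /Phi_denom !cimD /cim /= addr0. Qed.

Lemma opn_ge0 : 0 <= opn. Proof. exact: (opnorm_ge0 P s_ge0 s_le s_meas). Qed.

Lemma inv_eta_gt0 : 0 < eta^-1. Proof. by rewrite invr_gt0. Qed.

Lemma opn2_gt0 : 0 < 2 + opn. Proof. by have := opn_ge0; lra. Qed.

Lemma im_lb_gt0 : 0 < im_lb. Proof. by rewrite divr_gt0 ?exprn_gt0 ?opn2_gt0. Qed.

Lemma Sint_cim_le u z x : Beta u -> Heta eta z ->
  eta * Sint x (fun y => cim (u z y)) <= opn.
Proof.
move=> hu hz; have [[bu _] [_ ue]] := hu z hz.
have := cmod_Sop_le x inv_eta_gt0 bu ue.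
move=> /(le_trans (le_trans (ler_norm _) (cim_le_cmod _))); rewrite cim_Sop => h.
by rewrite mulrC -ler_pdivlMr.
Qed.

Lemma cim_Phi_denom_ge u z x : Beta u -> Heta eta z -> eta <= cim (Phi_denom u z x).
Proof.
move=> hu hz; have [[_ pu] _] := hu z hz; have [_ [ez _]] := hz.
by rewrite cim_Phi_denom ler_wpDr // Sint_ge0 // => y; exact: ltW.
Qed.

Lemma cmod_Phi_denom_le u z x : Beta u -> Heta eta z ->
  cmod (Phi_denom u z x) <= (2 + opn) / eta.
Proof.
move=> hu hz; have [[bu _] [_ ue]] := hu z hz; have [_ [_ zle]] := hz.
have Su := cmod_Sop_le x inv_eta_gt0 bu ue.
have ax : `|a x| <= eta^-1.
  have ax_sup : `|a x| <= supnormR a.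
    by apply: ub_le_sup; [exists Ma => _ [y _ <-] | exists x].
  have : supnormR a < eta^-1 by rewrite -(ltr_pM2l eta_gt0) mulfV ?gt_eqF.
  by move=> /ltW; apply: le_trans.
apply: le_trans (ler_cmodD _ _) _; apply: le_trans (lerD (ler_cmodD _ _) Su) _.
rewrite cmod_real mulrDl.
have -> : 2 / eta = eta^-1 + eta^-1 by rewrite mulrDl mul1r.
by have := lerD (lerD zle ax) (lexx (opn / eta)); rewrite mulrC.
Qed.

Lemma cmeasurable_Phi u z : Beta u -> Heta eta z -> cmeasurable (Phi u z).
Proof.
move=> hu hz; have [[bu _] _] := hu z hz.
pose re x := cre (Phi_denom u z x); pose im x := cim (Phi_denom u z x).
have mre : measurable_fun setT re.
  rewrite (_ : re = fun x => cre z + a x + Sint x (fun y => cre (u z y))).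
    apply: measurable_funD; first exact: measurable_funD (measurable_cst _) a_meas.
    exact/measurable_Sint/bounded_measurable_cre.
  by apply/funext => x; rewrite /re cre_Phi_denom.
have mim : measurable_fun setT im.
  rewrite (_ : im = fun x => cim z + Sint x (fun y => cim (u z y))).
    exact/(measurable_funD (measurable_cst _))/measurable_Sint/bounded_measurable_cim.
  by apply/funext => x; rewrite /im cim_Phi_denom.
have den0 x : 0 < re x ^+ 2 + im x ^+ 2.
  have := lt_le_trans eta_gt0 (cim_Phi_denom_ge x hu hz).
  by rewrite /im => ?; apply: ltr_wpDl (sqr_ge0 _) (exprn_gt0 _ _).
have mden := measurable_funV_gt0
  (measurable_funD (measurable_funX 2 mre) (measurable_funX 2 mim)) den0.
split.
  rewrite (_ : (fun x => _) = fun x => - (re x * (re x ^+ 2 + im x ^+ 2)^-1)).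
    exact/measurable_funN/measurable_funM.
  by apply/funext => x; rewrite /Phi /re /im creN creV.
rewrite (_ : (fun x => _) = fun x => im x * (re x ^+ 2 + im x ^+ 2)^-1).
  exact: measurable_funM.
by apply/funext => x; rewrite /Phi /re /im cimN cimV opprK.
Qed.

Lemma Beta_Phi u : Beta u -> Beta (Phi u).
Proof.
move=> hu z hz.
have ev x : eta <= cim (Phi_denom u z x) := cim_Phi_denom_ge x hu hz.
have im_ge x : im_lb <= cim (Phi u z x).
  have -> : im_lb = eta / ((2 + opn) / eta) ^+ 2.
    by field; rewrite !gt_eqF ?opn2_gt0.
  exact: cim_oppV_ge (ev x) (cmod_Phi_denom_le x hu hz).
have mod_le x : cmod (Phi u z x) <= eta^-1 := cmod_oppV_le eta_gt0 (ev x).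
split; last by split.
split; last by move=> x; exact: lt_le_trans im_lb_gt0 (im_ge x).
by split; [exact: cmeasurable_Phi | exists eta^-1].
Qed.

Lemma Heta_ieta : Heta eta (Complex 0 eta).
Proof.
rewrite /Heta /cim /=; do 2 split => //.
rewrite cmod_le_sqr; last by rewrite invr_ge0 ltW.
rewrite /cre /cim /= expr0n /= add0r exprVn.
have e2 : eta ^+ 2 <= 1 by rewrite exprn_ile1 // ltW.
have e3 : 1 <= (eta ^+ 2)^-1 by rewrite invf_ge1 ?exprn_gt0.
exact: le_trans e2 e3.
Qed.

Lemma Dh_le_Beta u w z x : Beta u -> Beta w -> Heta eta z ->
  Dh (u z x) (w z x) <= (2 / eta) ^+ 2 / im_lb ^+ 2.
Proof.
move=> hu hw hz; have [_ [lu mu]] := hu z hz; have [_ [lw mw]] := hw z hz.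
apply: Dh_le_cmodB im_lb_gt0 (lu x) (lw x) _.
apply: le_trans (ler_cmodD _ _) _; rewrite cmodN mulrDl mul1r.
exact: lerD.
Qed.

Lemma Dh_le_supD u w z x : Beta u -> Beta w -> Heta eta z ->
  Dh (u z x) (w z x) <= supD eta u w.
Proof.
move=> hu hw hz; apply: ub_le_sup; last by exists z, x.
by exists ((2 / eta) ^+ 2 / im_lb ^+ 2) => _ [z' [x' [hz' ->]]]; exact: Dh_le_Beta.
Qed.

Lemma supD_le (u w : R[i] -> X -> R[i]) K :
  (forall z x, Heta eta z -> Dh (u z x) (w z x) <= K) -> supD eta u w <= K.
Proof.
move=> uwK; apply: ge_sup; last by move=> _ [z [x [hz ->]]]; exact: uwK.
by exists (Dh (u (Complex 0 eta) point) (w (Complex 0 eta) point)), (Complex 0 eta), point;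
  split => //; exact: Heta_ieta.
Qed.

Lemma supD_ge0 u w : Beta u -> Beta w -> 0 <= supD eta u w.
Proof.
move=> hu hw; have hz := Heta_ieta; apply: le_trans (Dh_le_supD point hu hw hz).
by have [[_ pu] _] := hu _ hz; have [[_ pw] _] := hw _ hz; exact: Dh_ge0.
Qed.

Lemma supD_ext (u w u' w' : R[i] -> X -> R[i]) :
  (forall z, Heta eta z -> u' z = u z) -> (forall z, Heta eta z -> w' z = w z) ->
  supD eta u' w' = supD eta u w.
Proof.
move=> uu ww; rewrite /supD; congr sup; apply/seteqP; split => _ [z [x [hz ->]]];
  by exists z, x; rewrite ?uu ?ww.
Qed.

Lemma kfactor_ge0 : 0 <= kfactor P s eta.
Proof.
rewrite /kfactor; case: eqP => // /eqP o0; rewrite invr_ge0 exprn_ge0 //.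
by rewrite addr_ge0 // divr_ge0 ?sqr_ge0 ?opn_ge0.
Qed.

Lemma kfactor_lt1 : kfactor P s eta < 1.
Proof.
rewrite /kfactor; case: eqP => // /eqP o0.
have op : 0 < opn by rewrite lt_def o0 opn_ge0.
have h : 1 < 1 + eta ^+ 2 / opn by rewrite ltrDl divr_gt0 ?exprn_gt0.
by rewrite invf_lt1 ?exprn_gt0 ?(lt_trans ltr01) // expr2; nra.
Qed.

Lemma ratio_le_kfactor (c A B K Y : R) : eta <= c -> 0 <= A -> 0 <= B ->
  eta * A <= opn -> eta * B <= opn -> 0 <= K -> Y <= K * A * B ->
  Y / ((c + A) * (c + B)) <= kfactor P s eta * K.
Proof.
move=> ec A0 B0 eA eB K0 YK; rewrite /kfactor; case: eqP => [opn0 | /eqP opn0].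
  have A_0 : A = 0 by apply/eqP; rewrite eq_le A0 andbT -(pmulr_rle0 _ eta_gt0) -opn0.
  rewrite A_0 mulr0 mul0r in YK; rewrite mul0r A_0 addr0.
  apply: mulr_le0_ge0 => //; rewrite invr_ge0; apply: mulr_ge0.
    exact: le_trans (ltW eta_gt0) ec.
  exact: addr_ge0 (le_trans (ltW eta_gt0) ec) B0.
have opn_gt0 : 0 < opn by rewrite lt_def opn0 opn_ge0.
exact: (ratio_le_contraction eta_gt0 ec opn_gt0 A0 B0 eA eB K0 YK).
Qed.

Lemma Phi_denomB_sqr_le u w z x : Beta u -> Beta w -> Heta eta z ->
  (cre (Phi_denom u z x) - cre (Phi_denom w z x)) ^+ 2 +
  (cim (Phi_denom u z x) - cim (Phi_denom w z x)) ^+ 2 <=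
  supD eta u w * Sint x (fun y => cim (u z y)) * Sint x (fun y => cim (w z y)).
Proof.
move=> hu hw hz; have [[bu pu] _] := hu z hz; have [[bw pw] _] := hw z hz.
have addKB (p q r : R) : p + q - (p + r) = q - r by ring.
rewrite !cre_Phi_denom !cim_Phi_denom !addKB.
rewrite -(SintB x (bounded_measurable_cre bu) (bounded_measurable_cre bw)).
rewrite -(SintB x (bounded_measurable_cim bu) (bounded_measurable_cim bw)).
apply: Sint_cauchy_schwarz; rewrite ?supD_ge0 //.
- exact: bounded_measurableB (bounded_measurable_cre bu) (bounded_measurable_cre bw).
- exact: bounded_measurableB (bounded_measurable_cim bu) (bounded_measurable_cim bw).
- exact: bounded_measurable_cim.
- exact: bounded_measurable_cim.
- by move=> y; exact: ltW.
- by move=> y; exact: ltW.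
- by move=> y; apply: Dh_le_mul => //; exact: Dh_le_supD.
Qed.

Lemma Phi_contraction u w : Beta u -> Beta w ->
  supD eta (Phi u) (Phi w) <= kfactor P s eta * supD eta u w.
Proof.
move=> hu hw; apply: supD_le => z x hz.
have [[_ pu] _] := hu z hz; have [[_ pw] _] := hw z hz; have [_ [ez _]] := hz.
have pos v : Beta v -> 0 < cim (Phi_denom v z x).
  by move=> hv; apply: lt_le_trans eta_gt0 (cim_Phi_denom_ge x hv hz).
rewrite /Phi Dh_oppV ?pos // /Dh cmod_sqr creB cimB !cim_Phi_denom.
apply: ratio_le_kfactor; rewrite ?Sint_ge0 ?Sint_cim_le ?supD_ge0 //.
- by move=> y; exact: ltW.
- by move=> y; exact: ltW.
- by rewrite -!cim_Phi_denom; exact: Phi_denomB_sqr_le.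
Qed.

Lemma Phi_fixpoint_unique u w : Beta u -> Beta w ->
  (forall z, Heta eta z -> Phi u z = u z) -> (forall z, Heta eta z -> Phi w z = w z) ->
  forall z, Heta eta z -> u z = w z.
Proof.
move=> hu hw fu fw z hz; apply/funext => x.
have := Phi_contraction hu hw; rewrite (supD_ext fu fw) => contr.
have D0 : supD eta u w <= 0.
  by have := supD_ge0 hu hw; have := kfactor_ge0; have := kfactor_lt1; nra.
have [[_ pu] [_ mu]] := hu z hz; have [[_ pw] [_ mw]] := hw z hz.
apply/eqP; rewrite -subr_eq0; apply/eqP/cmod_le0.
have := cmodB_le_Dh eta_gt0 (pu x) (pw x) (mu x) (mw x) (le_trans (Dh_le_supD x hu hw hz) D0).
by rewrite sqrtr0 mul0r.
Qed.

Definition const_i : R[i] -> X -> R[i] := fun _ _ => Complex 0 1.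

Lemma Beta_const_i : Beta const_i.
Proof.
have c1 : cmod (Complex 0 1 : R[i]) = 1.
  by rewrite /cmod /cre /cim /= expr0n expr1n add0r sqrtr1.
have e1 : 1 <= eta^-1 by rewrite invf_ge1 // ltW.
move=> z hz; split; first split.
- by split; [split; exact: measurable_cst | exists 1 => y; rewrite /const_i c1].
- by move=> y; rewrite /const_i /cim /=.
split => x; rewrite /const_i ?c1 // /cim /=.
rewrite ler_pdivrMr ?exprn_gt0 ?opn2_gt0 //.
have e3 : eta ^+ 3 <= 1 by rewrite exprn_ile1 // ltW.
by rewrite mul1r expr2; have := opn_ge0; nra.
Qed.

Definition Phi_iter n := iter n Phi const_i.

Lemma Beta_Phi_iter n : Beta (Phi_iter n).
Proof. by elim: n => [|n IH]; [exact: Beta_const_i | exact: Beta_Phi]. Qed.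

Local Notation k := (kfactor P s eta).

(* The contraction factor is stated for [D], which is quadratic in distances:
   distances contract by its square root. *)
Definition rate := Num.sqrt k.

Lemma rate_ge0 : 0 <= rate. Proof. exact: sqrtr_ge0. Qed.

Lemma rate_sqr : rate ^+ 2 = k. Proof. exact/sqr_sqrtr/kfactor_ge0. Qed.

Lemma rate_lt1 : rate < 1.
Proof. by rewrite -sqrtr1 ltr_sqrt ?ltr01 // kfactor_lt1. Qed.

Lemma rate_range : 0 <= rate < 1. Proof. by rewrite rate_ge0 rate_lt1. Qed.

Lemma supD_Phi_iter_le n :
  supD eta (Phi_iter n.+1) (Phi_iter n) <= k ^+ n * supD eta (Phi_iter 1) (Phi_iter 0).
Proof.
elim: n => [|n IH]; first by rewrite expr0 mul1r.
apply: le_trans (Phi_contraction (Beta_Phi_iter n.+1) (Beta_Phi_iter n)) _.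
by rewrite exprS -mulrA; apply: ler_wpM2l => //; exact: kfactor_ge0.
Qed.

Definition step0 := Num.sqrt (supD eta (Phi_iter 1) (Phi_iter 0)) / eta.

Lemma step0_ge0 : 0 <= step0.
Proof. by rewrite divr_ge0 ?sqrtr_ge0 // ltW. Qed.

Lemma cmod_Phi_iter_step n z x : Heta eta z ->
  cmod (Phi_iter n.+1 z x - Phi_iter n z x) <= step0 * rate ^+ n.
Proof.
move=> hz; have hu := Beta_Phi_iter n.+1; have hw := Beta_Phi_iter n.
have [[_ pu] [_ mu]] := hu z hz; have [[_ pw] [_ mw]] := hw z hz.
apply: le_trans (cmodB_le_Dh eta_gt0 (pu x) (pw x) (mu x) (mw x)
  (le_trans (Dh_le_supD x hu hw hz) (supD_Phi_iter_le n))) _.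
rewrite sqrtrM ?exprn_ge0 ?kfactor_ge0 // -rate_sqr -exprM mulnC exprM sqrtr_sqr.
rewrite ger0_norm ?exprn_ge0 ?rate_ge0 // /step0.
by rewrite [rate ^+ n * _]mulrC mulrAC.
Qed.

Definition Phi_lim z x : R[i] :=
  Complex (geometric_lim (fun n => cre (Phi_iter n z x)) step0 rate)
          (geometric_lim (fun n => cim (Phi_iter n z x)) step0 rate).

Local Notation lim_err n := (step0 / (1 - rate) * rate ^+ n).

Lemma Phi_iter_lim_close n z x : Heta eta z ->
  `|cre (Phi_iter n z x) - cre (Phi_lim z x)| <= lim_err n /\
  `|cim (Phi_iter n z x) - cim (Phi_lim z x)| <= lim_err n.
Proof.
move=> hz; rewrite mulrAC; split; apply: geometric_lim_bound step0_ge0 rate_range _ n => m.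
- by rewrite -creB; apply: le_trans (cre_le_cmod _) (cmod_Phi_iter_step m x hz).
- by rewrite -cimB; apply: le_trans (cim_le_cmod _) (cmod_Phi_iter_step m x hz).
Qed.

Lemma cmod_Phi_iter_lim n z x : Heta eta z ->
  cmod (Phi_iter n z x - Phi_lim z x) <= 2 * lim_err n.
Proof.
move=> hz; have [hre him] := Phi_iter_lim_close n x hz.
apply: le_trans (cmod_le_normD _) _; rewrite creB cimB mulrDl mul1r.
exact: lerD.
Qed.

Lemma lim_err_ge0 n : 0 <= lim_err n.
Proof.
by rewrite mulr_ge0 ?exprn_ge0 ?rate_ge0 // divr_ge0 ?step0_ge0 // subr_ge0 ltW ?rate_lt1.
Qed.

Lemma Beta_Phi_lim : Beta Phi_lim.
Proof.
move=> z hz.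
have mod_le x : cmod (Phi_lim z x) <= eta^-1.
  rewrite -subr_le0; apply: (@le0_of_geometric _ rate (2 * (step0 / (1 - rate)))) => [|n].
    exact: rate_range.
  have [_ [_ mu]] := Beta_Phi_iter n hz.
  have := ler_cmodD (Phi_iter n z x) (Phi_lim z x - Phi_iter n z x).
  rewrite addrC subrK -opprB cmodN => h.
  by have := mu x; have := cmod_Phi_iter_lim n x hz; rewrite mulrA; lra.
have im_ge x : im_lb <= cim (Phi_lim z x).
  rewrite -subr_le0; apply: (@le0_of_geometric _ rate (step0 / (1 - rate))) => [|n].
    exact: rate_range.
  have [_ [lu _]] := Beta_Phi_iter n hz; have := lu x.
  by have [_] := Phi_iter_lim_close n x hz; rewrite ler_norml => /andP[? ?]; lra.
split; last by split.
split; last by move=> x; exact: lt_le_trans im_lb_gt0 (im_ge x).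
split; last by exists eta^-1.
split.
- apply: (measurable_fun_cvg (h := fun n x => cre (Phi_iter n z x))).
    by move=> n; have [[[[]]]] := Beta_Phi_iter n hz.
  move=> x _; apply: (cvg_of_geometric_bound rate_range) => n.
  exact: (Phi_iter_lim_close n x hz).1.
- apply: (measurable_fun_cvg (h := fun n x => cim (Phi_iter n z x))).
    by move=> n; have [[[[]]]] := Beta_Phi_iter n hz.
  move=> x _; apply: (cvg_of_geometric_bound rate_range) => n.
  exact: (Phi_iter_lim_close n x hz).2.
Qed.

Lemma lim_err_succ n : lim_err n.+1 <= lim_err n.
Proof.
by rewrite exprS mulrCA ler_piMl ?lim_err_ge0 //; exact/ltW/rate_lt1.
Qed.

(* [Phi Phi_lim] is compared with [Phi_iter n.+1 = Phi (Phi_iter n)], which the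
   contraction keeps as close to it as [Phi_iter n] is to [Phi_lim]. *)
Lemma Phi_lim_fixed z : Heta eta z -> Phi Phi_lim z = Phi_lim z.
Proof.
move=> hz; apply/funext => x.
have hL := Beta_Phi_lim; have hPL := Beta_Phi hL.
pose E := (2 / im_lb / eta + 2) * (step0 / (1 - rate)).
apply/eqP; rewrite -subr_eq0; apply/eqP/cmod_le0.
apply: (le0_of_geometric (E := E) rate_range) => n.
have D_lim : supD eta Phi_lim (Phi_iter n) <= (2 * lim_err n / im_lb) ^+ 2.
  rewrite expr_div_n; apply: supD_le => z' x' hz'.
  have [_ [lL _]] := hL z' hz'; have [_ [lU _]] := Beta_Phi_iter n hz'.
  apply: Dh_le_cmodB im_lb_gt0 (lL x') (lU x') _.
  by rewrite -opprB cmodN; exact: cmod_Phi_iter_lim.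
have D_next : Dh (Phi Phi_lim z x) (Phi_iter n.+1 z x) <= (2 * lim_err n / im_lb) ^+ 2.
  apply: le_trans (Dh_le_supD x hPL (Beta_Phi_iter n.+1) hz) _.
  apply: le_trans (Phi_contraction hL (Beta_Phi_iter n)) _.
  apply: le_trans D_lim; apply: ler_piMl; first exact: supD_ge0 hL (Beta_Phi_iter n).
  exact/ltW/kfactor_lt1.
have [[_ pP] [_ mP]] := hPL z hz; have [[_ pU] [_ mU]] := Beta_Phi_iter n.+1 hz.
have close_next := cmodB_le_Dh eta_gt0 (pP x) (pU x) (mP x) (mU x) D_next.
rewrite sqrtr_sqr ger0_norm in close_next; last first.
  by apply: divr_ge0; [exact: mulr_ge0 (ler0n _ 2) (lim_err_ge0 n) | exact: ltW im_lb_gt0].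
have := ler_cmodD (Phi Phi_lim z x - Phi_iter n.+1 z x) (Phi_iter n.+1 z x - Phi_lim z x).
rewrite addrA subrK => tri.
have EE : E * rate ^+ n = 2 * lim_err n / im_lb / eta + 2 * lim_err n.
  have r1 : 1 - rate != 0 by rewrite subr_eq0 eq_sym lt_eqF ?rate_lt1.
  by rewrite /E; field; rewrite r1 !gt_eqF ?opn2_gt0.
have := cmod_Phi_iter_lim n.+1 x hz; have := lim_err_succ n; rewrite EE; lra.
Qed.

End FixedPointMap.

Theorem mainTheorem12 (R : realType) (d : measure_display) (X : measurableType d)
  (P : probability X R) (a : X -> R) (s : X -> X -> R) (eta : R) :
  measurable_fun setT a ->
  (exists M : R, forall x, `|a x| <= M) ->
  measurable_fun setT (fun p : X * X => s p.1 p.2) ->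
  (exists M : R, forall x y, s x y <= M) ->
  (forall x y, 0 <= s x y) ->
  (forall x y, s x y = s y x) ->
  0 < eta -> eta < 1 -> eta * supnormR a < 1 ->
  (forall u, Beta P s eta u -> Beta P s eta (Phi P a s u)) /\
  (forall u w, Beta P s eta u -> Beta P s eta w ->
     supD eta (Phi P a s u) (Phi P a s w) <= kfactor P s eta * supD eta u w) /\
  (exists u, Beta P s eta u /\ forall z, Heta eta z -> Phi P a s u z = u z) /\
  (forall u w, Beta P s eta u -> Beta P s eta w ->
     (forall z, Heta eta z -> Phi P a s u z = u z) ->
     (forall z, Heta eta z -> Phi P a s w z = w z) ->
     forall z, Heta eta z -> u z = w z).
Proof.
move=> a_meas [Ma a_le] s_meas [Ms s_le] s_ge0 _ eta_gt0 eta_lt1 eta_a.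
split; first exact: Beta_Phi a_meas a_le s_ge0 s_le s_meas eta_gt0 eta_a.
split; first exact: (@Phi_contraction R d X P a s eta Ms s_ge0 s_le s_meas eta_gt0 eta_lt1).
split; last exact: Phi_fixpoint_unique s_ge0 s_le s_meas eta_gt0 eta_lt1.
exists (Phi_lim P a s eta); split.
- exact: Beta_Phi_lim a_meas a_le s_ge0 s_le s_meas eta_gt0 eta_lt1 eta_a.
- exact: Phi_lim_fixed a_meas a_le s_ge0 s_le s_meas eta_gt0 eta_lt1 eta_a.
Qed.
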